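(* Let $a\in\mathbb{C}$, let $v=\{v_n\}_{n=1}^\infty\in\ell^1(\mathbb{N})$ be a complex sequence and $V=\mathrm{diag}(v_1,v_2,\dots)$. Then \[ \sigma_{\mathrm p}(J_a+V)\subset\{\pm2\}\cup\Big\{z\in\mathbb{C}\setminus[-2,2]\ \Big|\ \sqrt{|z^2-4|}\le g_a(z)\,\|v\|_{\ell^1}\Big\}. \]
   Context: $\mathbb{N}=\{1,2,\dots\}$. For $a\in\mathbb{C}$, $J_a$ is the operator on $\ell^2(\mathbb{N})$ with $(J_a\psi)_1=a\psi_1+\psi_2$ and $(J_a\psi)_n=\psi_{n-1}+\psi_{n+1}$ for $n\ge2$. Every $z\in\mathbb{C}\setminus[-2,2]$ can be written uniquely as $z=k+k^{-1}$ with $0<|k|<1$, and for such $z$ one defines \[ g_a(z):=\sup_{n\in\mathbb{N}}\Big|1-\frac{k-a}{1-ak}\,k^{2n-1}\Big|, \] with the convention $g_a(a+a^{-1})=+\infty$ when $|a|>1$ (where $1-ak=0$). $\sigma_{\mathrm p}$ denotes the set of eigenvalues. *)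

From Stdlib Require Import Reals ClassicalEpsilon.
From Coquelicot Require Import Coquelicot.
Open Scope R_scope.

(* Sequences are indexed from 0: psi i stands for psi_{i+1}. *)

Definition JaV (a : C) (v psi : nat -> C) (i : nat) : C :=
  match i with
  | O => Cplus (Cmult (Cplus a (v O)) (psi O)) (psi 1%nat)
  | S j => Cplus (Cplus (psi j) (Cmult (v i) (psi i))) (psi (S i))
  end.

Definition in_l2 (psi : nat -> C) : Prop := ex_series (fun n => (Cmod (psi n)) ^ 2).
Definition in_l1 (v : nat -> C) : Prop := ex_series (fun n => Cmod (v n)).
Definition l1_norm (v : nat -> C) : R := Series (fun n => Cmod (v n)).

Definition is_eigenvalue (a : C) (v : nat -> C) (z : C) : Prop :=
  exists psi : nat -> C, in_l2 psi /\ (exists n, psi n <> RtoC 0) /\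
    forall i, JaV a v psi i = Cmult z (psi i).

Definition in_segment (z : C) : Prop := snd z = 0 /\ -2 <= fst z <= 2.

Definition is_k_of (z k : C) : Prop :=
  0 < Cmod k < 1 /\ z = Cplus k (Cinv k).

(* g_a(z) as an extended real; +oo in the convention case 1 - a k = 0.
   The sup is over n >= 1, i.e. exponent 2n-1 = 2m+1 for m : nat. *)
Definition g (a z : C) : Rbar :=
  if excluded_middle_informative
       (exists k, is_k_of z k /\ Cminus (RtoC 1) (Cmult a k) = RtoC 0)
  then p_infty
  else Lub_Rbar (fun r => exists k (m : nat), is_k_of z k /\
         r = Cmod (Cminus (RtoC 1)
                   (Cmult (Cdiv (Cminus k a) (Cminus (RtoC 1) (Cmult a k)))
                          (pow_n k (2 * m + 1))))).

Definition bound_holds (a z : C) (nv : R) : Prop :=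
  match g a z with
  | p_infty => True
  | Finite r => sqrt (Cmod (Cminus (Cmult z z) (RtoC 4))) <= r * nv
  | m_infty => False
  end.

From Stdlib Require Import Reals Lra Lia Arith Classical ClassicalEpsilon.
From Coquelicot Require Import Coquelicot.
Open Scope R_scope.

(* Write z = k + 1/k with |k| <= 1.  Preceded by the ghost entry a psi_1, an
   eigenvector psi solves the free recurrence chi_{n+1} = z chi_n - chi_{n-1}
   perturbed by v.  Variation of constants against the free solutions k^n and
   phi_n = k^-n - r k^(n-1), where r = (k - a)/(1 - a k) makes phi satisfy the
   boundary condition, writes (k - 1/k) psi_n through two Wronskians; these are
   sums of v_i psi_i against the free solutions, taken from the boundary for phi
   and from infinity for k^n (psi decays).  At a maximum of |psi| this gives
   |k - 1/k| <= sup_m |1 - r k^(2m+1)| * ||v||_1 = g_a(z) ||v||_1 when |k| < 1.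
   For z in (-2,2) we have |k| = 1, both k^n and k^-n are bounded, and the same
   estimate, started where the tail of v is small, forces psi to vanish there,
   hence everywhere. *)

Lemma pow_n_Cpow (k : C) (n : nat) : pow_n k n = (k ^ n)%C.
Proof. induction n as [|n IH]; [reflexivity|]. simpl. now rewrite IH. Qed.

Lemma argmax_upto (f : nat -> R) (N : nat) :
  exists j, (j <= N)%nat /\ forall i, (i <= N)%nat -> f i <= f j.
Proof.
  induction N as [|N [j [Hj Hmax]]].
  - exists 0%nat; split; [lia|]. intros i Hi. replace i with 0%nat by lia. lra.
  - destruct (Rle_dec (f (S N)) (f j)).
    + exists j; split; [lia|]. intros i Hi.
      destruct (Nat.eq_dec i (S N)) as [->|]; [lra|]. apply Hmax; lia.
    + exists (S N); split; [lia|]. intros i Hi.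
      destruct (Nat.eq_dec i (S N)) as [->|]; [lra|]. specialize (Hmax i ltac:(lia)); lra.
Qed.

Lemma vanishing_seq_has_max (f : nat -> R) :
  (forall i, 0 <= f i) -> is_lim_seq f 0 -> exists j, forall i, f i <= f j.
Proof.
  intros Hf Hlim.
  destruct (classic (exists n0, 0 < f n0)) as [[n0 Hn0] | Hzero].
  - apply is_lim_seq_spec in Hlim. destruct (Hlim (mkposreal _ Hn0)) as [N HN].
    destruct (argmax_upto f (Nat.max N n0)) as [j [_ Hmax]].
    exists j; intros i. destruct (le_lt_dec i (Nat.max N n0)) as [Hi|Hi]; [auto|].
    specialize (HN i ltac:(lia)); specialize (Hmax n0 ltac:(lia)); simpl in HN.
    apply Rabs_def2 in HN. lra.
  - exists 0%nat; intros i. specialize (Hf 0%nat).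
    destruct (Rlt_le_dec 0 (f i)); [exfalso; eauto | lra].
Qed.

Lemma sum_n_m_le_loc (a b : nat -> R) (n m : nat) :
  (forall k, (n <= k <= m)%nat -> a k <= b k) -> sum_n_m a n m <= sum_n_m b n m.
Proof.
  intros Hab. destruct (le_lt_dec n m) as [Hnm|Hnm].
  - induction Hnm as [|m Hnm IH].
    + rewrite !sum_n_n. apply Hab; lia.
    + rewrite !sum_n_Sm by lia. apply Rplus_le_compat; [apply IH|]; intros; apply Hab; lia.
  - rewrite !sum_n_m_zero by exact Hnm. apply Rle_refl.
Qed.

Lemma sum_n_le_Series (a : nat -> R) (N : nat) :
  (forall i, 0 <= a i) -> ex_series a -> sum_n a N <= Series a.
Proof.
  intros Ha Hex.
  assert (Hlim : is_lim_seq (fun M => sum_n a (M + N)) (Series a)).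
  { apply is_lim_seq_incr_n. exact (Series_correct a Hex). }
  refine (is_lim_seq_le (fun _ => sum_n a N) _ _ _ _ (is_lim_seq_const _) Hlim).
  intros M. unfold sum_n. rewrite (sum_n_m_Chasles a 0 N (M + N)) by lia.
  assert (0 <= sum_n_m a (S N) (M + N)).
  { pose proof (sum_n_m_le (fun _ => 0) a (S N) (M + N) Ha) as H.
    rewrite (sum_n_m_const_zero (G := R_AbelianMonoid)) in H. exact H. }
  change plus with Rplus; lra.
Qed.

Lemma le_of_le_plus_lim_0 (x y : R) (u : nat -> R) (m : nat) :
  is_lim_seq u 0 -> (forall M, (m <= M)%nat -> x <= u M + y) -> x <= y.
Proof.
  intros Hu Hle.
  assert (Hlim : is_lim_seq (fun M => u (M + m)%nat + y) (0 + y)).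
  { apply is_lim_seq_plus'; [apply is_lim_seq_incr_n; exact Hu | apply is_lim_seq_const]. }
  pose proof (is_lim_seq_le (fun _ => x) _ _ _ (fun M => Hle (M + m)%nat ltac:(lia))
                (is_lim_seq_const x) Hlim) as H.
  simpl in H; lra.
Qed.

Lemma l2_Cmod_lim_0 (psi : nat -> C) : in_l2 psi -> is_lim_seq (fun n => Cmod (psi n)) 0.
Proof.
  intros H. apply ex_series_lim_0 in H.
  apply (is_lim_seq_continuous sqrt) in H; [|apply continuity_pt_sqrt; lra].
  rewrite sqrt_0 in H. eapply is_lim_seq_ext; [|exact H].
  intros n. cbv beta. apply sqrt_pow2, Cmod_ge_0.
Qed.

Definition wronskian (p q : nat -> C) (n : nat) : C := p n * q (S n) - p (S n) * q n.

Lemma wronskian_cross (p chi xi : nat -> C) (n : nat) :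
  (p n * wronskian chi xi n)%C = (wronskian p xi n * chi n - wronskian p chi n * xi n)%C.
Proof. unfold wronskian. ring. Qed.

Section Wronskian.

Variables (z : C) (v : nat -> C).

Definition free_solution (chi : nat -> C) : Prop :=
  forall m, chi (S (S m)) = (z * chi (S m) - chi m)%C.

Definition perturbed_solution (p : nat -> C) : Prop :=
  forall m, p (S (S m)) = (z * p (S m) - p m - v m * p (S m))%C.

Lemma perturbed_solution_eventually_0 (p : nat -> C) (N : nat) :
  perturbed_solution p -> (forall i, (N <= i)%nat -> p i = 0) -> forall i, p i = 0.
Proof.
  intros Hp HN.
  enough (H : forall d i, (N <= i + d)%nat -> p i = 0) by (intros i; apply (H N); lia).
  induction d as [|d IH]; intros i Hi; [apply HN; lia|].
  assert (E : p i = (z * p (S i) - v i * p (S i) - p (S (S i)))%C) by (rewrite Hp; ring).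
  rewrite E, (IH (S i)), (IH (S (S i))) by lia. ring.
Qed.

Variables (p chi : nat -> C).
Hypothesis (Hp : perturbed_solution p) (Hchi : free_solution chi).

Lemma wronskian_S (m : nat) :
  wronskian p chi (S m) = (wronskian p chi m + chi (S m) * v m * p (S m))%C.
Proof. unfold wronskian. rewrite Hp, Hchi. ring. Qed.

Lemma wronskian_telescope (m M : nat) : (m <= M)%nat ->
  wronskian p chi (S M)
  = (wronskian p chi m + sum_n_m (fun i => chi (S i) * v i * p (S i)) m M)%C.
Proof.
  induction 1 as [|M Hm IH].
  - rewrite sum_n_n. apply wronskian_S.
  - rewrite wronskian_S, IH, sum_n_Sm by lia. change plus with Cplus. ring.
Qed.

Lemma Cmod_wronskian_diff_le (c : C) (G B : R) (m M : nat) : (m <= M)%nat ->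
  (forall i, (m <= i <= M)%nat -> Cmod (c * chi (S i)) <= G /\ Cmod (p (S i)) <= B) ->
  Cmod (c * (wronskian p chi (S M) - wronskian p chi m))
  <= G * B * sum_n_m (fun i => Cmod (v i)) m M.
Proof.
  intros HmM Hbound. rewrite (wronskian_telescope m M HmM).
  set (s := sum_n_m _ m M).
  replace (c * (wronskian p chi m + s - wronskian p chi m))%C with (c * s)%C by ring.
  change (Cmod (mult c s) <= G * B * sum_n_m (fun i => Cmod (v i)) m M).
  unfold s. rewrite <- (sum_n_m_mult_l (K := C_Ring) c).
  eapply Rle_trans; [apply (norm_sum_n_m (V := C_NormedModule))|].
  replace (G * B * _) with (sum_n_m (fun i => G * B * Cmod (v i)) m M)
    by exact (sum_n_m_mult_l (K := R_Ring) (G * B) _ m M).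
  apply sum_n_m_le_loc. intros i Hi. destruct (Hbound i Hi) as [Hc HB].
  change (Cmod (c * (chi (S i) * v i * p (S i))) <= G * B * Cmod (v i)).
  replace (c * (chi (S i) * v i * p (S i)))%C with (c * chi (S i) * p (S i) * v i)%C by ring.
  rewrite (Cmod_mult _ (v i)), (Cmod_mult _ (p (S i))).
  apply Rmult_le_compat_r; [apply Cmod_ge_0|].
  apply Rmult_le_compat; auto using Cmod_ge_0.
Qed.

Lemma wronskian_lim_0 : (forall i, Cmod (chi i) <= 1) ->
  is_lim_seq (fun n => Cmod (p n)) 0 -> is_lim_seq (fun n => Cmod (wronskian p chi n)) 0.
Proof.
  intros Hchi1 Hlim.
  apply (is_lim_seq_le_le (fun _ => 0) _ (fun n => Cmod (p n) + Cmod (p (S n)))).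
  - intros n. split; [apply Cmod_ge_0|]. unfold wronskian.
    eapply Rle_trans; [apply Cmod_triangle|]. rewrite Cmod_opp, !Cmod_mult.
    pose proof (Hchi1 n); pose proof (Hchi1 (S n)).
    pose proof (Cmod_ge_0 (p n)); pose proof (Cmod_ge_0 (p (S n))).
    apply Rplus_le_compat; rewrite <- Rmult_1_r; apply Rmult_le_compat_l; auto.
  - apply is_lim_seq_const.
  - replace (Finite 0) with (Finite (0 + 0)) by (f_equal; ring).
    apply is_lim_seq_plus'; [exact Hlim | apply (is_lim_seq_incr_1 (fun n => Cmod (p n))), Hlim].
Qed.

Lemma Cmod_wronskian_tail_le (c : C) (G B Sv : R) (m : nat) :
  (forall i, Cmod (chi i) <= 1) -> is_lim_seq (fun n => Cmod (p n)) 0 ->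
  0 <= G -> 0 <= B ->
  (forall i, (m <= i)%nat -> Cmod (c * chi (S i)) <= G /\ Cmod (p (S i)) <= B) ->
  (forall M, (m <= M)%nat -> sum_n_m (fun i => Cmod (v i)) m M <= Sv) ->
  Cmod (c * wronskian p chi m) <= G * B * Sv.
Proof.
  intros Hchi1 Hlim HG HB Hbound Hsum.
  apply (le_of_le_plus_lim_0 _ _ (fun M => Cmod c * Cmod (wronskian p chi (S M))) m).
  - apply (is_lim_seq_incr_1 (fun n => Cmod c * Cmod (wronskian p chi n))).
    replace (Finite 0) with (Rbar_mult (Cmod c) 0) by (simpl; f_equal; ring).
    apply is_lim_seq_scal_l, wronskian_lim_0; assumption.
  - intros M HmM.
    replace (c * wronskian p chi m)%C
      with (c * wronskian p chi (S M) - c * (wronskian p chi (S M) - wronskian p chi m))%C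
      by ring.
    eapply Rle_trans; [apply Cmod_triangle|]. rewrite Cmod_opp, Cmod_mult.
    apply Rplus_le_compat_l.
    eapply Rle_trans.
    { apply (Cmod_wronskian_diff_le c G B m M HmM). intros i Hi; apply Hbound; lia. }
    apply Rmult_le_compat_l; [apply Rmult_le_pos|]; auto.
Qed.

End Wronskian.

Lemma Cmod_wronskian_cross_le (p chi xi : nat -> C) (n : nat) :
  Cmod (p n) * Cmod (wronskian chi xi n)
  <= Cmod (chi n * wronskian p xi n) + Cmod (xi n * wronskian p chi n).
Proof.
  rewrite <- Cmod_mult, wronskian_cross. unfold Cminus.
  eapply Rle_trans; [apply Cmod_triangle|]. rewrite Cmod_opp, !(Cmult_comm _ (wronskian _ _ n)).
  apply Rle_refl.
Qed.

Section FreeSolutions.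

Variables (k r : C).
Hypothesis k_neq0 : k <> 0.

Definition jost_solution (n : nat) : C := k ^ n.
(* For r = (k - a)/(1 - a k) this solution satisfies the boundary condition of
   J_a, and [regular_mul_jost] is where the terms of g_a(z) come from. *)
Definition regular_solution (n : nat) : C := (/ k) ^ n - r / k * k ^ n.

Lemma jost_solution_free : free_solution (k + / k) jost_solution.
Proof. intros m. unfold jost_solution. rewrite !Cpow_S. field. exact k_neq0. Qed.

Lemma regular_solution_free : free_solution (k + / k) regular_solution.
Proof. intros m. unfold regular_solution. rewrite !Cpow_S. field. exact k_neq0. Qed.

Lemma wronskian_regular_jost (n : nat) :
  wronskian regular_solution jost_solution n = (k - / k)%C.
Proof.
  unfold wronskian, regular_solution, jost_solution.
  rewrite !Cpow_inv, !Cpow_S by exact k_neq0.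
  field. split; auto using Cpow_nz.
Qed.

Lemma regular_mul_jost (m d : nat) :
  (regular_solution (S m) * jost_solution (S m + d) = k ^ d * (1 - r * k ^ (2 * m + 1)))%C.
Proof.
  unfold regular_solution, jost_solution.
  replace (2 * m + 1)%nat with (S (m + m)) by lia.
  rewrite Cpow_inv, !Cpow_add_r, !Cpow_S by exact k_neq0.
  rewrite Cpow_add_r. field. split; auto using Cpow_nz.
Qed.

Lemma Cmod_jost_solution_le (n : nat) : Cmod k <= 1 -> Cmod (jost_solution n) <= 1.
Proof.
  intros Hk. unfold jost_solution. rewrite Cmod_pow, <- (pow1 n).
  apply pow_incr. split; [apply Cmod_ge_0 | exact Hk].
Qed.

Lemma Cmod_regular_mul_jost_le (G : R) (m M : nat) :
  Cmod k <= 1 -> (forall m, Cmod (1 - r * k ^ (2 * m + 1)) <= G) -> (m <= M)%nat ->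
  Cmod (regular_solution (S m) * jost_solution (S M)) <= G.
Proof.
  intros Hk HG HmM. replace M with (m + (M - m))%nat by lia.
  change (S (m + (M - m))) with (S m + (M - m))%nat.
  rewrite regular_mul_jost, Cmod_mult, <- (Rmult_1_l G).
  apply Rmult_le_compat; [apply Cmod_ge_0 | apply Cmod_ge_0 | | apply HG].
  exact (Cmod_jost_solution_le (M - m) Hk).
Qed.

End FreeSolutions.

Lemma Cmod_regular_solution_0 (k : C) (n : nat) :
  Cmod k = 1 -> Cmod (regular_solution k 0 n) = 1.
Proof.
  intros Hk. assert (Hk0 : k <> 0) by (intros ->; rewrite Cmod_0 in Hk; lra).
  unfold regular_solution. replace ((/ k) ^ n - 0 / k * k ^ n)%C with ((/ k) ^ n)%C
    by (field; exact Hk0).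
  rewrite Cmod_pow, Cmod_inv, Hk, Rinv_1 by exact Hk0. apply pow1.
Qed.

(* The boundary row (a + v_1) psi_1 + psi_2 = z psi_1 is the bulk row of the
   recurrence once psi is preceded by the ghost entry a psi_1. *)
Definition boundary_extension (a : C) (psi : nat -> C) (n : nat) : C :=
  match n with O => a * psi O | S j => psi j end.

Lemma boundary_extension_perturbed (a z : C) (v psi : nat -> C) :
  (forall i, JaV a v psi i = (z * psi i)%C) ->
  perturbed_solution z v (boundary_extension a psi).
Proof.
  intros Heig [|j]; simpl.
  - specialize (Heig 0%nat). simpl in Heig. rewrite <- Heig. ring.
  - specialize (Heig (S j)). simpl in Heig. rewrite <- Heig. ring.
Qed.

Lemma boundary_extension_lim_0 (a : C) (psi : nat -> C) :
  in_l2 psi -> is_lim_seq (fun n => Cmod (boundary_extension a psi n)) 0.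
Proof. intros H. apply is_lim_seq_incr_1. exact (l2_Cmod_lim_0 psi H). Qed.

Lemma wronskian_boundary_regular_0 (a k : C) (psi : nat -> C) :
  k <> 0 -> (1 - a * k)%C <> 0 ->
  wronskian (boundary_extension a psi) (regular_solution k ((k - a) / (1 - a * k))) 0 = 0.
Proof.
  intros Hk Hak. unfold wronskian, regular_solution, boundary_extension. simpl.
  field. split; assumption.
Qed.

Lemma Csqrt_exists (w : C) : exists s, (s * s)%C = w.
Proof.
  destruct w as [p q].
  set (m := Cmod (p, q)).
  assert (Hm2 : m ^ 2 = p ^ 2 + q ^ 2) by (unfold m; rewrite Cmod2_alt; reflexivity).
  assert (Hm0 : 0 <= m) by apply Cmod_ge_0.
  assert (Hpm : - m <= p <= m) by (split; nra).
  set (s1 := sqrt ((m + p) / 2)). set (s2 := sqrt ((m - p) / 2)).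
  assert (E1 : s1 * s1 = (m + p) / 2) by (apply sqrt_sqrt; lra).
  assert (E2 : s2 * s2 = (m - p) / 2) by (apply sqrt_sqrt; lra).
  assert (P1 : 0 <= s1) by apply sqrt_pos.
  assert (P2 : 0 <= s2) by apply sqrt_pos.
  assert (E12 : (s1 * s2) ^ 2 = (q / 2) ^ 2).
  { replace ((s1 * s2) ^ 2) with ((s1 * s1) * (s2 * s2)) by ring. rewrite E1, E2. nra. }
  assert (E12' : s1 * s2 = Rabs q / 2).
  { pose proof (pow2_abs q). pose proof (Rabs_pos q).
    assert (0 <= s1 * s2) by (apply Rmult_le_pos; assumption). nra. }
  destruct (Rle_dec 0 q).
  - exists (s1, s2). rewrite Rabs_pos_eq in E12' by lra. unfold Cmult; simpl. f_equal; nra.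
  - exists (s1, - s2). rewrite Rabs_left in E12' by lra. unfold Cmult; simpl. f_equal; nra.
Qed.

Lemma joukowski_preimage (z : C) : exists k : C, k <> 0 /\ Cmod k <= 1 /\ z = (k + / k)%C.
Proof.
  destruct (Csqrt_exists (z * z - 4)) as [s Hs].
  set (k1 := ((z + s) / 2)%C). set (k2 := ((z - s) / 2)%C).
  assert (H2 : RtoC 2 <> 0) by (intros E; injection E; lra).
  assert (Hprod : (k1 * k2)%C = 1).
  { unfold k1, k2. replace ((z + s) / 2 * ((z - s) / 2))%C with ((z * z - s * s) / 4)%C
      by (field; exact H2).
    rewrite Hs. field; intros E; injection E; lra. }
  assert (Hk1 : k1 <> 0) by (intros E; rewrite E, Cmult_0_l in Hprod; injection Hprod; lra).
  assert (Hk2 : k2 <> 0) by (intros E; rewrite E, Cmult_0_r in Hprod; injection Hprod; lra).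
  assert (Hinv1 : (/ k1)%C = k2) by (rewrite <- (Cmult_1_r (/ k1)), <- Hprod; field; exact Hk1).
  assert (Hinv2 : (/ k2)%C = k1) by (rewrite <- (Cmult_1_l (/ k2)), <- Hprod; field; exact Hk2).
  assert (Hsum : z = (k1 + k2)%C) by (unfold k1, k2; field; exact H2).
  destruct (Rle_dec (Cmod k1) 1).
  - exists k1. rewrite Hinv1. auto.
  - exists k2. rewrite Hinv2, Cplus_comm. split; [exact Hk2 | split; [|exact Hsum]].
    rewrite <- Hinv1, Cmod_inv by exact Hk1.
    rewrite <- Rinv_1. apply Rinv_le_contravar; lra.
Qed.

Lemma in_segment_joukowski_unimodular (k : C) : Cmod k = 1 -> in_segment (k + / k).
Proof.
  destruct k as [x y]. intros Hk.
  assert (Hxy : x ^ 2 + y ^ 2 = 1).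
  { pose proof (Cmod2_alt (x, y)) as E. rewrite Hk in E. simpl in E. lra. }
  unfold in_segment, Cinv, Cplus; cbn [fst snd]. rewrite Hxy. split; [field | split; nra].
Qed.

Lemma joukowski_root_outside_segment (z : C) : ~ in_segment z -> exists k, is_k_of z k.
Proof.
  intros Hz. destruct (joukowski_preimage z) as [k [Hk0 [Hk1 Hzk]]].
  exists k. split; [split|exact Hzk].
  - apply Cmod_gt_0, Hk0.
  - destruct Hk1 as [|E]; [assumption|]. exfalso. apply Hz. rewrite Hzk.
    apply in_segment_joukowski_unimodular, E.
Qed.

Lemma unimodular_root (t : R) : -2 < t < 2 ->
  exists k, Cmod k = 1 /\ RtoC t = (k + / k)%C /\ 0 < Cmod (k - / k).
Proof.
  intros Ht. set (x := t / 2). set (y := sqrt (1 - x ^ 2)).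
  assert (Hy2 : y ^ 2 = 1 - x ^ 2) by (apply pow2_sqrt; unfold x; nra).
  assert (Hy : 0 < y) by (apply sqrt_lt_R0; unfold x; nra).
  assert (Hnorm : x ^ 2 + y ^ 2 = 1) by lra.
  exists (x, y).
  assert (Hinv : (/ (x, y))%C = (x, - y)).
  { unfold Cinv; cbn [fst snd]. rewrite Hnorm. f_equal; field. }
  rewrite Hinv. split; [|split].
  - unfold Cmod; cbn [fst snd]. rewrite Hnorm. apply sqrt_1.
  - unfold Cplus, RtoC; cbn [fst snd]. unfold x. f_equal; field.
  - unfold Cminus, Cplus, Copp, Cmod; cbn [fst snd]. apply sqrt_lt_R0. nra.
Qed.

Lemma sqrt_Cmod_joukowski (k : C) : k <> 0 ->
  sqrt (Cmod ((k + / k) * (k + / k) - 4)) = Cmod (k - / k).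
Proof.
  intros Hk.
  replace ((k + / k) * (k + / k) - 4)%C with ((k - / k) * (k - / k))%C by (field; exact Hk).
  rewrite Cmod_mult. apply sqrt_square, Cmod_ge_0.
Qed.

Lemma decaying_solution_unimodular_eq_0 (v : nat -> C) (k : C) (p : nat -> C) :
  in_l1 v -> Cmod k = 1 -> 0 < Cmod (k - / k) ->
  perturbed_solution (k + / k) v p -> is_lim_seq (fun n => Cmod (p n)) 0 ->
  forall i, p i = 0.
Proof.
  intros Hv Hk1 Hc Hp Hlim.
  assert (Hk0 : k <> 0) by (intros ->; rewrite Cmod_0 in Hk1; lra).
  set (c := Cmod (k - / k)) in Hc.
  assert (Hc4 : 0 < c / 4) by lra.
  destruct (Cauchy_ex_series _ Hv (mkposreal _ Hc4)) as [n Hn].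
  destruct (vanishing_seq_has_max (fun i => Cmod (p (n + i)%nat))) as [j Hj].
  { intros i; apply Cmod_ge_0. }
  { eapply is_lim_seq_ext; [|exact (proj1 (is_lim_seq_incr_n _ n 0) Hlim)].
    intros i; simpl. now rewrite Nat.add_comm. }
  set (m := (n + j)%nat). set (B := Cmod (p m)).
  assert (Hmax : forall i, (n <= i)%nat -> Cmod (p i) <= B).
  { intros i Hi. specialize (Hj (i - n)%nat). now replace (n + (i - n))%nat with i in Hj by lia. }
  assert (Htail : forall M, (m <= M)%nat -> sum_n_m (fun i => Cmod (v i)) m M <= c / 4).
  { intros M HM. specialize (Hn m M ltac:(lia) ltac:(lia)). apply Rlt_le.
    eapply Rle_lt_trans; [apply Rle_abs | exact Hn]. }
  set (e := jost_solution k). set (f := regular_solution k 0).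
  assert (He1 : forall i, Cmod (e i) = 1).
  { intros i. unfold e, jost_solution. rewrite Cmod_pow, Hk1. apply pow1. }
  assert (Hf1 : forall i, Cmod (f i) = 1) by (intros i; apply Cmod_regular_solution_0, Hk1).
  assert (Hunit : forall g h : nat -> C, (forall i, Cmod (g i) = 1) -> (forall i, Cmod (h i) = 1) ->
            forall i, (m <= i)%nat -> Cmod (g m * h (S i)) <= 1 /\ Cmod (p (S i)) <= B).
  { intros g h Hg Hh i Hi. rewrite Cmod_mult, Hg, Hh. split; [lra | apply Hmax; lia]. }
  pose proof (Cmod_wronskian_tail_le _ v p e Hp (jost_solution_free k Hk0) (f m) 1 B (c / 4)
    m (fun i => Req_le _ _ (He1 i)) Hlim ltac:(lra) (Cmod_ge_0 _) (Hunit f e Hf1 He1) Htail).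
  pose proof (Cmod_wronskian_tail_le _ v p f Hp (regular_solution_free k 0 Hk0) (e m) 1 B (c / 4)
    m (fun i => Req_le _ _ (Hf1 i)) Hlim ltac:(lra) (Cmod_ge_0 _) (Hunit e f He1 Hf1) Htail).
  pose proof (Cmod_wronskian_cross_le p f e m) as Hcross.
  rewrite (wronskian_regular_jost k 0 Hk0) in Hcross. fold c B in Hcross.
  assert (HB0 : B = 0) by (assert (0 <= B) by apply Cmod_ge_0; nra).
  apply (perturbed_solution_eventually_0 _ _ p n Hp).
  intros i Hi. apply Cmod_eq_0. pose proof (Hmax i Hi). pose proof (Cmod_ge_0 (p i)). lra.
Qed.

Lemma no_eigenvalue_inside_segment (a : C) (v : nat -> C) (t : R) :
  in_l1 v -> -2 < t < 2 -> ~ is_eigenvalue a v t.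
Proof.
  intros Hv Ht [psi [Hl2 [[n0 Hn0] Heig]]].
  destruct (unimodular_root t Ht) as [k [Hk1 [Hz Hc]]].
  apply Hn0. change (psi n0) with (boundary_extension a psi (S n0)).
  apply (decaying_solution_unimodular_eq_0 v k); try assumption.
  - rewrite <- Hz. apply boundary_extension_perturbed, Heig.
  - exact (boundary_extension_lim_0 a psi Hl2).
Qed.

Lemma decaying_solution_max_bound (v : nat -> C) (k r : C) (p : nat -> C) (G : R) (j : nat) :
  in_l1 v -> 0 < Cmod k < 1 -> (forall m, Cmod (1 - r * k ^ (2 * m + 1)) <= G) ->
  perturbed_solution (k + / k) v p -> is_lim_seq (fun n => Cmod (p n)) 0 ->
  wronskian p (regular_solution k r) 0 = 0 ->
  (forall i, Cmod (p (S i)) <= Cmod (p (S j))) ->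
  Cmod (k - / k) * Cmod (p (S j)) <= G * Cmod (p (S j)) * l1_norm v.
Proof.
  intros Hv [Hk0 Hk1] HG Hp Hlim HW0 Hmax.
  assert (Hk : k <> 0) by (apply Cmod_gt_0, Hk0).
  set (e := jost_solution k). set (f := regular_solution k r). set (B := Cmod (p (S j))) in *.
  assert (HG0 : 0 <= G) by (eapply Rle_trans; [apply Cmod_ge_0 | apply (HG 0%nat)]).
  set (Sj := sum_n (fun i => Cmod (v i)) j).
  assert (Hhead : Cmod (e (S j) * wronskian p f (S j)) <= G * B * Sj).
  { replace (wronskian p f (S j)) with (wronskian p f (S j) - wronskian p f 0)%C
      by (unfold f; rewrite HW0; ring).
    apply (Cmod_wronskian_diff_le _ v p f Hp (regular_solution_free k r Hk)); [lia|].
    intros i Hi. split; [|apply Hmax].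
    rewrite Cmult_comm. apply Cmod_regular_mul_jost_le; [exact Hk | lra | exact HG | lia]. }
  assert (Htail : Cmod (f (S j) * wronskian p e (S j)) <= G * B * (l1_norm v - Sj)).
  { apply (Cmod_wronskian_tail_le _ v p e Hp (jost_solution_free k Hk)); try assumption.
    - intros i. apply Cmod_jost_solution_le. lra.
    - apply Cmod_ge_0.
    - intros i Hi. split; [|apply Hmax].
      apply Cmod_regular_mul_jost_le; [exact Hk | lra | exact HG | lia].
    - intros M HM. unfold Sj, l1_norm.
      pose proof (sum_n_le_Series (fun i => Cmod (v i)) M (fun i => Cmod_ge_0 _) Hv) as Hle.
      unfold sum_n in *. rewrite (sum_n_m_Chasles _ 0 j M) in Hle by lia.
      change plus with Rplus in Hle. lra. }
  pose proof (Cmod_wronskian_cross_le p f e (S j)) as Hcross.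
  rewrite (wronskian_regular_jost k r Hk) in Hcross. fold B in Hcross.
  rewrite (Rmult_comm _ B).
  replace (G * B * l1_norm v) with (G * B * Sj + G * B * (l1_norm v - Sj)) by ring. lra.
Qed.

Lemma eigenvalue_exterior_bound (a : C) (v : nat -> C) (z k : C) (G : R) :
  in_l1 v -> is_k_of z k -> (1 - a * k)%C <> 0 ->
  (forall m, Cmod (1 - (k - a) / (1 - a * k) * k ^ (2 * m + 1)) <= G) ->
  is_eigenvalue a v z -> Cmod (k - / k) <= G * l1_norm v.
Proof.
  intros Hv [Hk Hz] Hak HG [psi [Hl2 [[n0 Hn0] Heig]]].
  assert (Hk0 : k <> 0) by (apply Cmod_gt_0, Hk).
  destruct (vanishing_seq_has_max (fun i => Cmod (psi i))) as [j Hj].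
  { intros i; apply Cmod_ge_0. }
  { exact (l2_Cmod_lim_0 psi Hl2). }
  assert (Hpos : 0 < Cmod (psi j)) by (eapply Rlt_le_trans; [apply Cmod_gt_0, Hn0 | apply Hj]).
  apply Rmult_le_reg_r with (Cmod (psi j)); [exact Hpos|].
  rewrite Rmult_assoc, (Rmult_comm (l1_norm v)), <- Rmult_assoc.
  apply (decaying_solution_max_bound v k ((k - a) / (1 - a * k)) (boundary_extension a psi));
    try assumption.
  - rewrite <- Hz. apply boundary_extension_perturbed, Heig.
  - exact (boundary_extension_lim_0 a psi Hl2).
  - exact (wronskian_boundary_regular_0 a k psi Hk0 Hak).
Qed.

Lemma bound_holds_of_root (a z k : C) (nv : R) : is_k_of z k ->
  ((1 - a * k)%C <> 0 -> forall G,
     (forall m, Cmod (1 - (k - a) / (1 - a * k) * k ^ (2 * m + 1)) <= G) ->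
     sqrt (Cmod (z * z - 4)) <= G * nv) ->
  bound_holds a z nv.
Proof.
  intros Hk Hbound. unfold bound_holds, g.
  destruct (excluded_middle_informative _) as [_ | Hnone]; [exact I|].
  assert (Hak : (1 - a * k)%C <> 0) by (intros E; apply Hnone; exists k; auto).
  match goal with |- context [Lub_Rbar ?E] => set (Vals := E) end.
  assert (HVals : forall m, Vals (Cmod (1 - (k - a) / (1 - a * k) * k ^ (2 * m + 1)))).
  { intros m. exists k, m. split; [exact Hk|]. now rewrite <- pow_n_Cpow. }
  destruct (Lub_Rbar_correct Vals) as [Hub _].
  destruct (Lub_Rbar Vals) as [G | |]; [| exact I | exact (Hub _ (HVals 0%nat))].
  apply (Hbound Hak G). intros m. exact (Hub _ (HVals m)).
Qed.

Theorem theorem3p1 (a : C) (v : nat -> C) (hv : in_l1 v) (z : C) :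
  is_eigenvalue a v z ->
  z = RtoC 2 \/ z = RtoC (-2) \/
  (~ in_segment z /\ bound_holds a z (l1_norm v)).
Proof.
  intros Heig.
  destruct (classic (in_segment z)) as [[Him Hre] | Hout].
  - destruct z as [t y]; simpl in Him, Hre; subst y.
    destruct (Req_dec t 2) as [->|H2]; [now left|].
    destruct (Req_dec t (-2)) as [->|Hm2]; [now right; left|].
    exfalso. exact (no_eigenvalue_inside_segment a v t hv ltac:(lra) Heig).
  - right; right. split; [exact Hout|].
    destruct (joukowski_root_outside_segment z Hout) as [k Hk].
    apply (bound_holds_of_root a z k); [exact Hk|]. intros Hak G HG.
    pose proof Hk as [[Hk0 _] Hz].
    rewrite Hz, sqrt_Cmod_joukowski by (apply Cmod_gt_0, Hk0).
    exact (eigenvalue_exterior_bound a v z k G hv Hk Hak HG Heig).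
Qed.
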